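(* Let $f(\mathbf{x})=\mathbf{x}^{T}A\mathbf{x}+b^{T}\mathbf{x}+1$ with $A\in\mathbb{R}^{n\times n}$ symmetric and $b\in\mathbb{R}^n$. If $A_1,\dots,A_n$ and $B_1,\dots,B_n$ are real symmetric $2\times 2$ matrices with $f(\mathbf{x})=\det(I_2+\sum_j x_jA_j)=\det(I_2+\sum_j x_jB_j)$ for all $\mathbf{x}\in\mathbb{R}^n$, then there exists a real orthogonal $2\times 2$ matrix $V$ with $V^{T}A_jV=B_j$ for all $j=1,\dots,n$. *)

From HB Require Import structures.
From mathcomp Require Import all_boot all_order all_algebra.
Set Implicit Arguments. Unset Strict Implicit. Unset Printing Implicit Defensive.
Import Order.TTheory GRing.Theory Num.Theory.
Local Open Scope ring_scope.

Definition quad_f (R : comRingType) (n : nat) (A : 'M[R]_n) (b : 'cV[R]_n)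
  (x : 'cV[R]_n) : R :=
  (x^T *m A *m x) 0 0 + (b^T *m x) 0 0 + 1.

Definition lmp_det (R : comRingType) (n : nat) (As : 'I_n -> 'M[R]_2)
  (x : 'cV[R]_n) : R :=
  \det (1%:M + \sum_(j < n) x j 0 *: As j).

From HB Require Import structures.
From mathcomp Require Import all_boot all_order all_algebra.
From mathcomp Require Import ring lra.
Import Order.TTheory GRing.Theory Num.Theory.
Set Implicit Arguments. Unset Strict Implicit.
Local Open Scope ring_scope.

(* A symmetric 2x2 matrix M is determined by its trace and by the vector
   dev M = (M00 - M11, 2 M01) of its traceless part, and 4 det M = (tr M)^2 - |dev M|^2.
   Evaluating the two determinantal representations of f on the planes spanned by two
   coordinate directions therefore shows that A_j and B_j have the same traces and that
   the families (dev A_j) and (dev B_j) have the same Gram matrix.  Two families of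
   plane vectors with the same Gram matrix differ by an orthogonal map, i.e. a rotation
   by some angle 2t followed possibly by a reflection; conjugating by the rotation by t
   (with the same reflection) rotates each dev A_j by 2t, which gives V. *)

Lemma ord2P (i : 'I_2) : i = 0 \/ i = 1.
Proof. by case: i => [[|[|m]]] Hi //; [left|right]; apply/val_inj. Qed.

Lemma sum_ord2 (V : nmodType) (F : 'I_2 -> V) : \sum_(i < 2) F i = F 0 + F 1.
Proof. by rewrite big_ord_recl big_ord1; congr (_ + F _); apply/val_inj. Qed.

Lemma det_mx2 (R : comNzRingType) (M : 'M[R]_2) :
  \det M = M 0 0 * M 1 1 - M 0 1 * M 1 0.
Proof.
rewrite (expand_det_row _ 0) sum_ord2 /cofactor !det_mx11 !mxE /=.
have -> : lift 0 (0 : 'I_1) = 1 :> 'I_2 by apply/val_inj.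
have -> : lift 1 (0 : 'I_1) = 0 :> 'I_2 by apply/val_inj.
by rewrite expr0 expr1; ring.
Qed.

Lemma sym_mx2_10 (R : nzRingType) (M : 'M[R]_2) : M^T = M -> M 1 0 = M 0 1.
Proof. by move=> symM; rewrite -[in LHS]symM mxE. Qed.

Lemma eq_lincomb4 (R : comNzRingType) (X Y l1 r1 l2 r2 l3 r3 l4 r4 k1 k2 k3 k4 : R) :
  l1 = r1 -> l2 = r2 -> l3 = r3 -> l4 = r4 ->
  X - Y = k1 * (l1 - r1) + k2 * (l2 - r2) + k3 * (l3 - r3) + k4 * (l4 - r4) -> X = Y.
Proof. by move=> -> -> -> ->; rewrite !subrr !mulr0 !addr0 => /eqP; rewrite subr_eq0 => /eqP. Qed.

Lemma lmp_det_pencil (R : comNzRingType) n (As : 'I_n -> 'M[R]_2) j k s u :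
  lmp_det As (s *: delta_mx j 0 + u *: delta_mx k 0) =
  \det (1%:M + (s *: As j + u *: As k)).
Proof.
have sum_delta i0 : \sum_(i < n) ((i == i0) && (0 == 0 :> 'I_1))%:R *: As i = As i0.
  rewrite (bigD1 i0) //= big1 ?addr0 => [|i /negbTE ne]; rewrite ?eqxx ?ne /=.
    by rewrite scale1r.
  by rewrite scale0r.
rewrite /lmp_det; congr (\det (_ + _)).
under eq_bigr => i _ do rewrite !mxE scalerDl -!scalerA.
by rewrite big_split /= -!scaler_sumr !sum_delta.
Qed.

Lemma det_sym_pencil (R : comNzRingType) (M N : 'M[R]_2) s u : M^T = M -> N^T = N ->
  \det (1%:M + (s *: M + u *: N)) =
  (1 + s * M 0 0 + u * N 0 0) * (1 + s * M 1 1 + u * N 1 1) - (s * M 0 1 + u * N 0 1) ^+ 2.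
Proof.
by move=> /sym_mx2_10 symM /sym_mx2_10 symN; rewrite det_mx2 !mxE /= symM symN; ring.
Qed.

Section PencilInvariants.
Variables (R : realFieldType) (I : Type) (As Bs : I -> 'M[R]_2).
Hypothesis pencil_eq : forall s u j k,
  \det (1%:M + (s *: As j + u *: As k)) = \det (1%:M + (s *: Bs j + u *: Bs k)).
Hypotheses (symAs : forall j, (As j)^T = As j) (symBs : forall j, (Bs j)^T = Bs j).

Let pencil_eq_entries s u j k :
  (1 + s * As j 0 0 + u * As k 0 0) * (1 + s * As j 1 1 + u * As k 1 1)
    - (s * As j 0 1 + u * As k 0 1) ^+ 2 =
  (1 + s * Bs j 0 0 + u * Bs k 0 0) * (1 + s * Bs j 1 1 + u * Bs k 1 1)
    - (s * Bs j 0 1 + u * Bs k 0 1) ^+ 2.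
Proof. by rewrite -!det_sym_pencil. Qed.

Lemma pencil_trace_eq j : As j 0 0 + As j 1 1 = Bs j 0 0 + Bs j 1 1.
Proof. by have := pencil_eq_entries 1 0 j j; have := pencil_eq_entries (-1) 0 j j; lra. Qed.

Lemma pencil_gram_eq j k :
  (As j 0 0 - As j 1 1) * (As k 0 0 - As k 1 1) + (2 * As j 0 1) * (2 * As k 0 1) =
  (Bs j 0 0 - Bs j 1 1) * (Bs k 0 0 - Bs k 1 1) + (2 * Bs j 0 1) * (2 * Bs k 0 1).
Proof.
have trj : Bs j 1 1 = As j 0 0 + As j 1 1 - Bs j 0 0 by rewrite pencil_trace_eq; ring.
have trk : Bs k 1 1 = As k 0 0 + As k 1 1 - Bs k 0 0 by rewrite pencil_trace_eq; ring.
have := pencil_eq_entries 1 1 j k; have := pencil_eq_entries 1 0 j j.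
have := pencil_eq_entries 1 0 k k; rewrite trj trk; lra.
Qed.

End PencilInvariants.

Lemma sqr_family_sign (R : idomainType) (I : finType) (w w' : I -> R) :
  (forall j k, w j * w k = w' j * w' k) ->
  exists s : R, s ^+ 2 = 1 /\ forall j, w' j = s * w j.
Proof.
move=> ww'.
have [/forallP same | /forallP differ] := boolP [forall j, w' j == w j].
  by exists 1; split=> [|j]; rewrite ?expr1n ?mul1r; apply/eqP.
have [k wk'_neq] : exists k, w' k != w k.
  by apply/existsP; rewrite -negb_forall; apply/negP => /forallP.
have wk'_opp : w' k = - w k.
  have : (w' k - w k) * (w' k + w k) = 0.
    by rewrite -[RHS](subrr (w k * w k)) [X in _ = X - _]ww'; ring.
  by move/eqP; rewrite mulf_eq0 subr_eq0 (negbTE wk'_neq) addr_eq0 => /eqP.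
have wk_neq0 : w k != 0 by apply: contra wk'_neq => /eqP wk0; rewrite wk'_opp wk0 oppr0.
exists (-1); split=> [|j]; first by rewrite sqrrN expr1n.
have : (w' j + w j) * w k = 0 by rewrite mulrDl -[w' j * _]opprK -mulrN -wk'_opp -ww'; ring.
by move/eqP; rewrite mulf_eq0 (negbTE wk_neq0) orbF addr_eq0 => /eqP ->; ring.
Qed.

Lemma gram2_orthogonal (R : realFieldType) (I : finType) (a c a' c' : I -> R) :
  (forall j k, a j * a k + c j * c k = a' j * a' k + c' j * c' k) ->
  exists g d s : R, [/\ g ^+ 2 + d ^+ 2 = 1, s ^+ 2 = 1 &
     forall j, g * a j + d * c j = a' j /\ s * (g * c j - d * a j) = c' j].
Proof.
move=> gram.
have [/existsP [j0 nz_j0] | all0] := boolP [exists j, a j * a j + c j * c j != 0]; last first.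
  exists 1, 0, 1; split=> [||j]; rewrite ?expr1n ?expr0n ?addr0 //.
  have /eqP norm0 : a j * a j + c j * c j == 0.
    by move: all0; rewrite negb_exists => /forallP/(_ j); rewrite negbK.
  have := gram j j; rewrite -norm0 => norm0'.
  have [-> ->] : a j = 0 /\ c j = 0 by split; nra.
  have [-> ->] : a' j = 0 /\ c' j = 0 by split; nra.
  by split; ring.
(* The cross products with the fixed vector j0 agree up to a common sign s. *)
pose w j := a j0 * c j - c j0 * a j.
pose w' j := a' j0 * c' j - c' j0 * a' j.
have [s [s2 sw]] : exists s : R, s ^+ 2 = 1 /\ forall j, w' j = s * w j.
  apply: sqr_family_sign => j k.
  have -> : w j * w k = (a j0 * a j0 + c j0 * c j0) * (a j * a k + c j * c k)
     - (a j0 * a j + c j0 * c j) * (a j0 * a k + c j0 * c k) by rewrite /w; ring.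
  by rewrite !gram /w'; ring.
have norm_j0 := gram j0 j0.
set N := a j0 * a j0 + c j0 * c j0 in nz_j0 norm_j0.
exists ((a j0 * a' j0 + s * c j0 * c' j0) / N), ((c j0 * a' j0 - s * a j0 * c' j0) / N), s.
split=> // [|j].
  apply: (eq_lincomb4 (k1 := -1/N) (k2 := c' j0 ^+ 2 / N) (k3 := 0) (k4 := 0)
    norm_j0 s2 s2 s2).
  by rewrite /N; field.
have gram_j := gram j0 j; have sw_j := sw j; rewrite /w /w' in sw_j; split.
  apply: (eq_lincomb4 (k1 := a' j0 / N) (k2 := c' j0 / N) (k3 := - a' j / N) (k4 := 0)
    gram_j sw_j norm_j0 norm_j0).
  by rewrite /N; field.
apply: (eq_lincomb4 (k1 := - a' j0 / N) (k2 := c' j0 * (a j0 * a j + c j0 * c j) / N)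
  (k3 := c' j0 / N) (k4 := - c' j / N) sw_j s2 gram_j norm_j0).
by rewrite /N; field.
Qed.

Lemma half_angle (R : rcfType) (g d : R) : g ^+ 2 + d ^+ 2 = 1 ->
  exists al be : R, [/\ al ^+ 2 + be ^+ 2 = 1, al ^+ 2 - be ^+ 2 = g & 2 * al * be = d].
Proof.
move=> gd1.
have [g_m1 | g_neq_m1] := eqVneq g (-1).
  have d0 : d = 0 by apply/eqP; rewrite -sqrf_eq0; move: gd1; rewrite g_m1; lra.
  by exists 0, 1; rewrite g_m1 d0; split; ring.
have g1_gt0 : 0 < 1 + g.
  have : -1 <= g by nra.
  by rewrite le_eqVlt eq_sym (negbTE g_neq_m1) /=; lra.
pose al := Num.sqrt ((1 + g) / 2).
have al2 : al ^+ 2 = (1 + g) / 2 by rewrite sqr_sqrtr // ltW // divr_gt0.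
have al_neq0 : al != 0 by rewrite sqrtr_eq0 -ltNge divr_gt0.
have d2 : d ^+ 2 = 1 - g ^+ 2 by rewrite -gd1; ring.
have g1_neq0 : 1 + g != 0 by rewrite gt_eqF.
exists al, (d / (2 * al)); split; rewrite ?expr_div_n ?exprMn ?al2 ?d2; field=> //.
Qed.

(* The rotation by the angle t with al = cos t, be = sin t, followed by the
   reflection diag(1, s) when s = -1. *)
Definition orth_mx2 (R : nzRingType) (al be s : R) : 'M[R]_2 :=
  \matrix_(i < 2, j < 2) if i == 0 then (if j == 0 then al else - (s * be))
                         else (if j == 0 then be else s * al).

Lemma orth_mx2_orthogonal (R : comNzRingType) (al be s : R) :
  al ^+ 2 + be ^+ 2 = 1 -> s ^+ 2 = 1 -> (orth_mx2 al be s)^T *m orth_mx2 al be s = 1%:M.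
Proof.
move=> ab1 s2; apply/matrixP => i j; rewrite !mxE sum_ord2 !mxE.
case: (ord2P i) => ->; case: (ord2P j) => -> /=.
- by rewrite -ab1; ring.
- ring.
- ring.
- by rewrite -[RHS]mulr1 -{1}s2 -ab1; ring.
Qed.

Lemma orth_mx2_conj (R : fieldType) (al be s : R) (M N : 'M[R]_2) :
  (2 : R) != 0 -> M^T = M -> N^T = N ->
  al ^+ 2 + be ^+ 2 = 1 -> s ^+ 2 = 1 ->
  M 0 0 + M 1 1 = N 0 0 + N 1 1 ->
  (al ^+ 2 - be ^+ 2) * (M 0 0 - M 1 1) + 2 * al * be * (2 * M 0 1) = N 0 0 - N 1 1 ->
  s * ((al ^+ 2 - be ^+ 2) * (2 * M 0 1) - 2 * al * be * (M 0 0 - M 1 1)) = 2 * N 0 1 ->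
  (orth_mx2 al be s)^T *m M *m orth_mx2 al be s = N.
Proof.
move=> two /sym_mx2_10 symM /sym_mx2_10 symN ab1 s2 tr dev0 dev1.
apply/matrixP => i j; rewrite !mxE !sum_ord2 !mxE.
case: (ord2P i) => ->; case: (ord2P j) => -> /=; rewrite !sum_ord2 !mxE /= ?symM ?symN.
- apply: (eq_lincomb4 (k1 := (M 0 0 + M 1 1) / 2) (k2 := 1 / 2) (k3 := 1 / 2) (k4 := 0)
    ab1 dev0 tr tr).
  by field.
- by apply: (eq_lincomb4 (k1 := 1 / 2) (k2 := 0) (k3 := 0) (k4 := 0) dev1 dev1 dev1 dev1); field.
- by apply: (eq_lincomb4 (k1 := 1 / 2) (k2 := 0) (k3 := 0) (k4 := 0) dev1 dev1 dev1 dev1); field.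
- apply: (eq_lincomb4 (k1 := (M 0 0 + M 1 1) / 2) (k2 := -1 / 2) (k3 := 1 / 2)
    (k4 := ((al ^+ 2 + be ^+ 2) * (M 0 0 + M 1 1)
            - ((al ^+ 2 - be ^+ 2) * (M 0 0 - M 1 1) + 2 * al * be * (2 * M 0 1))) / 2)
    ab1 dev0 tr s2).
  by field.
Qed.

Theorem mainTheorem4 (R : rcfType) (n : nat) (A : 'M[R]_n) (b : 'cV[R]_n)
  (As Bs : 'I_n -> 'M[R]_2) :
  A^T = A ->
  (forall j, (As j)^T = As j) ->
  (forall j, (Bs j)^T = Bs j) ->
  (forall x : 'cV[R]_n,
      quad_f A b x = lmp_det As x /\ quad_f A b x = lmp_det Bs x) ->
  exists V : 'M[R]_2,
    V^T *m V = 1%:M /\ (forall j, V^T *m As j *m V = Bs j).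
Proof.
move=> _ symAs symBs f_eq.
have pencil_eq s u j k :
    \det (1%:M + (s *: As j + u *: As k)) = \det (1%:M + (s *: Bs j + u *: Bs k)).
  by rewrite -!lmp_det_pencil; have [<- <-] := f_eq (s *: delta_mx j 0 + u *: delta_mx k 0).
have [g [d [s [gd1 s2 rot]]]] := gram2_orthogonal (pencil_gram_eq pencil_eq symAs symBs).
have [al [be [ab1 def_g def_d]]] := half_angle gd1.
exists (orth_mx2 al be s); split=> [|j]; first exact: orth_mx2_orthogonal.
have [dev0 dev1] := rot j; rewrite -def_g -def_d in dev0 dev1.
apply: orth_mx2_conj => //; first by rewrite pnatr_eq0.
exact: (pencil_trace_eq pencil_eq).
Qed.
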